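(* Let $X = [X_1 \; X_2] \in \mathbb{R}^{N\times P}$ with $X_1 \in \mathbb{R}^{N\times P_1}$, $X_2\in\mathbb{R}^{N\times P_2}$, $P = P_1+P_2$, and suppose the $N$-vector of ones $\mathbf{1}$ lies in the column span of $X_1$. Consider the hierarchical normal linear regression $$\mathbf{Y}\mid \boldsymbol\beta,\Phi \sim N(X_1\boldsymbol\beta_1 + X_2\boldsymbol\beta_2,\Phi),\quad \boldsymbol\beta_1\sim N(0,C),\quad \boldsymbol\beta_2\mid\Sigma\sim N(0,\Sigma),\quad \Sigma\sim f(\Sigma),\ \Phi\sim f(\Phi),$$ where $\Sigma\in\mathbb{R}^{P_2\times P_2}$ is positive definite and $\Phi = \mathrm{diag}(\phi_1^2,\dots,\phi_N^2)$ is diagonal and positive definite; in the Bayesian setting the prior densities are such that the posterior is proper. Let $$W = XVX'\Phi^{-1},\qquad V = \left(X'\Phi^{-1}X + \begin{bmatrix} C^{-1} & 0\\ 0 & \Sigma^{-1}\end{bmatrix}\right)^{-1},$$ with $C^{-1}$ taken to be the zero matrix, and write $w_{ij}$ for the $(i,j)$ entry of $W$. For $i\in\{1,\dots,N\}$, let $x_i'$ be the $i$-th row of $X$, let $B_i = \{j\in\{1,\dots,N\}: x_j = x_i,\ \phi_j=\phi_i\}$ and $L_i = \{1,\dots,N\}\setminus B_i$, and define the shrinkage factor $b_{iB_i} = \sum_{j\in B_i} w_{ij}$ and the pooling factor $b_{iL_i} = \sum_{j\in L_i} w_{ij}$. Then for every $i$, $0 < b_{iB_i}\le 1$ and $0\le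 b_{iL_i} < 1$.
   Context: $W$ is defined for given values of $\Sigma$ and $\Phi$, and $V$ is assumed to exist (the displayed matrix is invertible). $B_i$ is the ''borrower cluster'' of observation $i$ (rows with identical covariates and identical noise variance) and $L_i$ the set of ''lenders''. *)

From HB Require Import structures.
From mathcomp Require Import all_boot all_order all_algebra.
Set Implicit Arguments. Unset Strict Implicit. Unset Printing Implicit Defensive.
Import Order.TTheory GRing.Theory Num.Theory.
Local Open Scope ring_scope.

Section Defs.
Variable R : realFieldType.

Definition design N P1 P2 (X1 : 'M[R]_(N, P1)) (X2 : 'M[R]_(N, P2))
  : 'M[R]_(N, P1 + P2) := row_mx X1 X2.

Definition Phi_mx N (phi : 'I_N -> R) : 'M[R]_N := diag_mx (\row_i (phi i ^+ 2)).

Definition posdef n (S : 'M[R]_n) : Prop :=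
  S^T = S /\ forall v : 'cV[R]_n, v != 0 -> 0 < (v^T *m S *m v) ord0 ord0.

Definition prec_mx N P1 P2 (X1 : 'M[R]_(N, P1)) (X2 : 'M[R]_(N, P2))
  (Sigma : 'M[R]_P2) (phi : 'I_N -> R) : 'M[R]_(P1 + P2) :=
  (design X1 X2)^T *m invmx (Phi_mx phi) *m design X1 X2
  + block_mx (0 : 'M[R]_(P1, P1)) 0 0 (invmx Sigma).

Definition V_mx N P1 P2 (X1 : 'M[R]_(N, P1)) (X2 : 'M[R]_(N, P2))
  (Sigma : 'M[R]_P2) (phi : 'I_N -> R) : 'M[R]_(P1 + P2) :=
  invmx (prec_mx X1 X2 Sigma phi).

Definition W_mx N P1 P2 (X1 : 'M[R]_(N, P1)) (X2 : 'M[R]_(N, P2))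
  (Sigma : 'M[R]_P2) (phi : 'I_N -> R) : 'M[R]_N :=
  design X1 X2 *m V_mx X1 X2 Sigma phi *m (design X1 X2)^T *m invmx (Phi_mx phi).

Definition borrowers N P1 P2 (X1 : 'M[R]_(N, P1)) (X2 : 'M[R]_(N, P2))
  (phi : 'I_N -> R) (i : 'I_N) : {set 'I_N} :=
  [set j | (row j (design X1 X2) == row i (design X1 X2)) && (phi j == phi i)].

Definition lenders N P1 P2 (X1 : 'M[R]_(N, P1)) (X2 : 'M[R]_(N, P2))
  (phi : 'I_N -> R) (i : 'I_N) : {set 'I_N} :=
  ~: borrowers X1 X2 phi i.

Definition shrinkage N P1 P2 (X1 : 'M[R]_(N, P1)) (X2 : 'M[R]_(N, P2))
  (Sigma : 'M[R]_P2) (phi : 'I_N -> R) (i : 'I_N) : R :=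
  \sum_(j in borrowers X1 X2 phi i) W_mx X1 X2 Sigma phi i j.

Definition pooling N P1 P2 (X1 : 'M[R]_(N, P1)) (X2 : 'M[R]_(N, P2))
  (Sigma : 'M[R]_P2) (phi : 'I_N -> R) (i : 'I_N) : R :=
  \sum_(j in lenders X1 X2 phi i) W_mx X1 X2 Sigma phi i j.
End Defs.

(* The unpenalised intercept makes [W] fix the constant vector, so shrinkage
   and pooling add up to 1.  Write [G = X V X'] and [u = V x_i]: the quadratic
   form [u' V^-1 u = G_ii] is [sum_j (x_j' u)^2 / phi_j^2] plus a nonnegative
   [Sigma^-1] term, and [x_j' u = G_ii] on the borrower cluster, so
   [G_ii = |B_i| G_ii^2 / phi_i^2 + t] with [t >= 0].  As the shrinkage factor
   is [|B_i| G_ii / phi_i^2], it lies in (0, 1] as soon as [G_ii != 0], and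
   [G_ii = 0] would force [X u = 0], contradicting [x_i' e = 1] for the
   intercept coefficient vector [e]. *)

From HB Require Import structures.
From mathcomp Require Import all_boot all_order all_algebra.
From mathcomp Require Import ring lra.
Set Implicit Arguments. Unset Strict Implicit. Unset Printing Implicit Defensive.
Import Order.TTheory GRing.Theory Num.Theory.
Local Open Scope ring_scope.

Lemma invmx_diag (R : fieldType) n (d : 'rV[R]_n) :
  (forall i, d 0 i != 0) -> invmx (diag_mx d) = diag_mx (\row_i (d 0 i)^-1).
Proof.
move=> d_neq0.
have dd' : diag_mx d *m diag_mx (\row_i (d 0 i)^-1) = 1%:M.
  apply/matrixP => i j; rewrite mulmx_diag !mxE.
  by case: eqVneq => [->|]; rewrite ?mulr1n ?mulr0n ?divff.
have [dU _] := mulmx1_unit dd'.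
by rewrite -[LHS]mulmx1 -dd' mulKmx.
Qed.

Lemma posdef_unitmx (R : realFieldType) n (S : 'M[R]_n) :
  posdef S -> S \in unitmx.
Proof.
move=> [_ S_pos]; rewrite -row_free_unit -kermx_eq0.
apply/eqP/row_matrixP => k; rewrite row0.
set v := row k (kermx S).
have vS : v *m S = 0 by rewrite /v -row_mul mulmx_ker row0.
apply/eqP/negPn/negP => v_neq0.
have vT_neq0 : v^T != 0 by rewrite -(inj_eq (@trmx_inj _ _ _)) trmxK trmx0.
by have := S_pos _ vT_neq0; rewrite trmxK vS mul0mx mxE ltxx.
Qed.

Lemma posdef_invmx_form_ge0 (R : realFieldType) n (S : 'M[R]_n) (v : 'cV[R]_n) :
  posdef S -> 0 <= (v^T *m invmx S *m v) 0 0.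
Proof.
move=> S_pd; have S_unit := posdef_unitmx S_pd; case: S_pd => S_sym S_pos.
set w := invmx S *m v.
have -> : v^T *m invmx S *m v = w^T *m S *m w.
  by rewrite -mulmxA -/w -{1}[v](mulKVmx S_unit) trmx_mul S_sym.
have [->|w_neq0] := eqVneq w 0; first by rewrite mulmx0 mxE.
exact: ltW (S_pos _ w_neq0).
Qed.

Lemma quadratic_fixpoint_bounds (R : realFieldType) (q c t : R) :
  q != 0 -> 0 < c -> 0 <= t -> q = q ^+ 2 * c + t -> 0 < q * c <= 1.
Proof.
move=> q_neq0 c_gt0 t_ge0 q_eq.
have q_gt0 : 0 < q.
  rewrite lt_neqAle eq_sym q_neq0 q_eq addr_ge0 // mulr_ge0 ?sqr_ge0 //.
  exact: ltW.
have qc_le1 : q * (1 - q * c) = t by rewrite mulrBr mulr1 {1}q_eq; ring.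
by rewrite mulr_gt0 //= -subr_ge0 -(pmulr_rge0 _ q_gt0) qc_le1.
Qed.

Section Hierarchical.
Variables (R : realFieldType) (N P1 P2 : nat).
Variables (X1 : 'M[R]_(N, P1)) (X2 : 'M[R]_(N, P2)).
Variables (Sigma : 'M[R]_P2) (phi : 'I_N -> R).
Hypothesis phi_gt0 : forall i, 0 < phi i.
Hypothesis Sigma_posdef : posdef Sigma.
Hypothesis prec_unit : prec_mx X1 X2 Sigma phi \in unitmx.

Local Notation X := (design X1 X2).
Local Notation M := (prec_mx X1 X2 Sigma phi).
Local Notation V := (V_mx X1 X2 Sigma phi).
Local Notation W := (W_mx X1 X2 Sigma phi).
Local Notation G := (X *m V *m X^T).
Local Notation D := (diag_mx (\row_j (phi j ^+ 2)^-1)).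
Local Notation B := (borrowers X1 X2 phi).

Lemma invmx_Phi_mx : invmx (Phi_mx phi) = D.
Proof.
rewrite /Phi_mx invmx_diag => [|i]; last by rewrite mxE expf_neq0 ?gt_eqF.
by congr diag_mx; apply/rowP => i; rewrite !mxE.
Qed.

Lemma prec_mx_sym : M^T = M.
Proof.
case: Sigma_posdef => Sigma_sym _.
rewrite /prec_mx invmx_Phi_mx linearD /= !trmx_mul trmxK tr_diag_mx mulmxA.
by rewrite tr_block_mx !trmx0 trmx_inv Sigma_sym.
Qed.

Lemma prec_mx_form (u : 'cV_(P1 + P2)) :
  (u^T *m M *m u) 0 0 =
  \sum_j (X *m u) j 0 ^+ 2 / phi j ^+ 2
  + ((dsubmx u)^T *m invmx Sigma *m dsubmx u) 0 0.
Proof.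
rewrite /prec_mx invmx_Phi_mx mulmxDr mulmxDl mxE; congr (_ + _).
  rewrite !mulmxA -trmx_mul -!mulmxA mulmxA mul_mx_diag mxE.
  by apply: eq_bigr => j _; rewrite !mxE expr2 mulrAC.
rewrite -[in LHS](vsubmxK u) tr_col_mx mul_row_block !mulmx0 !addr0 add0r.
by rewrite mul_row_col mul0mx add0r.
Qed.

Lemma sqr_div_phi_ge0 (x : R) j : 0 <= x ^+ 2 / phi j ^+ 2.
Proof. by rewrite mulr_ge0 ?sqr_ge0 ?invr_ge0 ?exprn_ge0 // ltW. Qed.

Lemma W_mx_entry i j : W i j = G i j / phi j ^+ 2.
Proof. by rewrite /W_mx invmx_Phi_mx mul_mx_diag !mxE. Qed.

Lemma hat_entry i j : G i j = (row i X *m V *m (row j X)^T) 0 0.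
Proof.
rewrite -!row_mul tr_row !mxE.
by apply: eq_bigr => k _; rewrite !mxE.
Qed.

Lemma borrowersP i j : reflect (row j X = row i X /\ phi j = phi i) (j \in B i).
Proof. by rewrite inE; apply: (iffP andP) => -[/eqP ? /eqP ?]. Qed.

Lemma shrinkage_hat_diag i :
  shrinkage X1 X2 Sigma phi i = G i i * (#|B i|%:R / phi i ^+ 2).
Proof.
rewrite /shrinkage (eq_bigr (fun=> W i i)); last first.
  by move=> j /borrowersP[Xj phij]; rewrite !W_mx_entry phij !hat_entry Xj.
by rewrite sumr_const W_mx_entry -[_ *+ _]mulr_natr mulrAC mulrA.
Qed.

Local Notation hat_vec i := (V *m (row i X)^T).

Lemma prec_mx_hat_vec i : M *m hat_vec i = (row i X)^T.
Proof. exact: mulKVmx. Qed.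

Lemma design_hat_vec i j : (X *m hat_vec i) j 0 = G j i.
Proof. by rewrite hat_entry -!row_mul mulmxA [RHS]mxE. Qed.

Lemma prec_form_hat_vec i : ((hat_vec i)^T *m M *m hat_vec i) 0 0 = G i i.
Proof. by rewrite -mulmxA prec_mx_hat_vec -trmx_mul mxE hat_entry mulmxA. Qed.

Lemma hat_diag_decomposition i :
  exists2 t, 0 <= t & G i i = G i i ^+ 2 * (#|B i|%:R / phi i ^+ 2) + t.
Proof.
set u := hat_vec i.
have XuB j :
    j \in B i -> (X *m u) j 0 ^+ 2 / phi j ^+ 2 = G i i ^+ 2 / phi i ^+ 2.
  by move=> /borrowersP[Xj ->]; rewrite design_hat_vec !hat_entry Xj.
exists (\sum_(j | j \notin B i) (X *m u) j 0 ^+ 2 / phi j ^+ 2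
        + ((dsubmx u)^T *m invmx Sigma *m dsubmx u) 0 0).
  rewrite addr_ge0 ?posdef_invmx_form_ge0 // sumr_ge0 // => j _.
  exact: sqr_div_phi_ge0.
rewrite -{1}prec_form_hat_vec prec_mx_form (bigID (mem (B i))) /= addrA.
congr (_ + _ + _).
by rewrite (eq_bigr _ XuB) sumr_const -[_ *+ _]mulr_natr mulrAC mulrA.
Qed.

Variable b : 'cV[R]_P1.
Hypothesis intercept : X1 *m b = const_mx 1.
Local Notation e := (col_mx b (0 : 'cV_P2)).

Lemma design_intercept : X *m e = const_mx 1.
Proof. by rewrite /design mul_row_col mulmx0 addr0. Qed.

(* The intercept is unpenalised ([C^-1 = 0]), so only the likelihood part of
   the precision acts on it. *)
Lemma prec_mx_intercept : M *m e = X^T *m D *m (const_mx 1 : 'cV_N).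
Proof.
rewrite /prec_mx invmx_Phi_mx mulmxDl -(mulmxA _ X) design_intercept.
by rewrite mul_block_col !mul0mx !mulmx0 !addr0 col_mx0 addr0.
Qed.

Lemma W_mx_const1 : W *m const_mx 1 = const_mx 1 :> 'cV_N.
Proof.
rewrite /W_mx invmx_Phi_mx -!mulmxA (mulmxA X^T) -prec_mx_intercept.
by rewrite mulKmx // design_intercept.
Qed.

Lemma shrinkage_add_pooling i :
  shrinkage X1 X2 Sigma phi i + pooling X1 X2 Sigma phi i = 1.
Proof.
have /matrixP/(_ i 0) := W_mx_const1.
rewrite !mxE => <-; rewrite (bigID (mem (B i))) /=.
by congr (_ + _); apply: eq_big => j; rewrite ?inE ?mxE ?mulr1.
Qed.

Lemma hat_diag_neq0 i : G i i != 0.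
Proof.
apply/eqP => Gii0.
have := prec_form_hat_vec i; rewrite prec_mx_form Gii0.
move/eqP; rewrite paddr_eq0 ?posdef_invmx_form_ge0 ?sumr_ge0 //; last first.
  by move=> j _; apply: sqr_div_phi_ge0.
case/andP => /eqP sum0 _.
have Xu0 : X *m hat_vec i = 0.
  apply/matrixP => j k; rewrite ord1 [RHS]mxE.
  have /eqP := psumr_eq0P (fun j _ => sqr_div_phi_ge0 _ j) sum0 (i := j) isT.
  by rewrite mulf_eq0 invr_eq0 !expf_eq0 /= (gt_eqF (phi_gt0 j)) orbF => /eqP.
have : (row i X *m e) 0 0 = 1 by rewrite -row_mul design_intercept !mxE.
rewrite -[row i X]trmxK -prec_mx_hat_vec trmx_mul prec_mx_sym -mulmxA.
rewrite prec_mx_intercept !mulmxA -trmx_mul Xu0 trmx0 !mul0mx mxE => /eqP.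
by rewrite eq_sym oner_eq0.
Qed.

End Hierarchical.

Theorem theorem2 (R : realFieldType) (N P1 P2 : nat)
  (X1 : 'M[R]_(N, P1)) (X2 : 'M[R]_(N, P2))
  (Sigma : 'M[R]_P2) (phi : 'I_N -> R) :
  (exists b : 'cV[R]_P1, X1 *m b = const_mx 1) ->
  posdef Sigma ->
  (forall i, 0 < phi i) ->
  prec_mx X1 X2 Sigma phi \in unitmx ->
  forall i : 'I_N,
    0 < shrinkage X1 X2 Sigma phi i <= 1 /\
    0 <= pooling X1 X2 Sigma phi i < 1.
Proof.
move=> [b intercept] Sigma_pd phi_gt0 prec_unit i.
have sum1 := shrinkage_add_pooling phi_gt0 prec_unit intercept i.
have hat_neq0 := hat_diag_neq0 phi_gt0 Sigma_pd prec_unit intercept i.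
have [t t_ge0 hat_eq] := hat_diag_decomposition phi_gt0 Sigma_pd prec_unit i.
have cluster_gt0 : 0 < #|borrowers X1 X2 phi i|%:R / phi i ^+ 2 :> R.
  rewrite divr_gt0 ?exprn_gt0 // ltr0n.
  by apply/card_gt0P; exists i; apply/borrowersP.
have := quadratic_fixpoint_bounds hat_neq0 cluster_gt0 t_ge0 hat_eq.
rewrite -shrinkage_hat_diag // => /andP[shrink_gt0 shrink_le1].
by split; apply/andP; split; lra.
Qed.
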